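(* If $Q$ is a Jordan loop of order $9$ which is cyclic (i.e. $Q=\langle x\rangle$ for some $x\in Q$), then $Q$ is a group.
   Context: A loop is a set $Q$ with a binary operation (juxtaposition) and neutral element $e$ such that for all $a,b$ the equations $ax=b$, $ya=b$ have unique solutions. A Jordan loop is a commutative loop satisfying $x^2(yx)=(x^2y)x$. $\langle x\rangle$ denotes the subloop generated by $x$ (the smallest subloop containing $x$). *)

From mathcomp Require Import all_boot.
Set Implicit Arguments. Unset Strict Implicit. Unset Printing Implicit Defensive.

Definition is_loop (T : finType) (mul : T -> T -> T) (e : T) : Prop :=
  (forall x, mul e x = x /\ mul x e = x) /\
  (forall a b, exists! x, mul a x = b) /\
  (forall a b, exists! y, mul y a = b).

Definition is_jordan_loop (T : finType) (mul : T -> T -> T) (e : T) : Prop :=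
  is_loop mul e /\
  (forall x y, mul x y = mul y x) /\
  (forall x y, mul (mul x x) (mul y x) = mul (mul (mul x x) y) x).

(* S is a subloop: contains e, closed under multiplication and under both
   divisions (the unique solutions of a x = b and y a = b with a, b in S
   lie in S). *)
Definition is_subloop (T : finType) (mul : T -> T -> T) (e : T) (S : {set T}) : Prop :=
  e \in S /\
  (forall a b, a \in S -> b \in S -> mul a b \in S) /\
  (forall a x, a \in S -> mul a x \in S -> x \in S) /\
  (forall a y, a \in S -> mul y a \in S -> y \in S).

Definition in_gen_subloop (T : finType) (mul : T -> T -> T) (e : T) (x z : T) : Prop :=
  forall S : {set T}, is_subloop mul e S -> x \in S -> z \in S.

Definition generates (T : finType) (mul : T -> T -> T) (e : T) (x : T) : Prop :=
  forall z : T, in_gen_subloop mul e x z.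

Definition is_group_op (T : finType) (mul : T -> T -> T) : Prop :=
  forall x y z, mul x (mul y z) = mul (mul x y) z.

From mathcomp Require Import all_boot.
Set Implicit Arguments. Unset Strict Implicit. Unset Printing Implicit Defensive.

(* Enumerate Q as e, x, x^2, x x^2, ...: the element x x^2 is new, for otherwise
   {e, x, x^2} would be closed under multiplication (the Jordan identity gives
   x^2 x^2 = x (x x^2)) and hence a proper subloop containing x.  In this
   enumeration the multiplication table of Q is a commutative Latin square on
   {0, ..., 8} satisfying the Jordan identity, with 0 neutral, 1 1 = 2 and
   1 2 = 3.  A backtracking search over partial tables, propagating the entries
   forced by the Jordan identity, shows that every such table is associative. *)

(* Partial multiplication tables on {0, ..., 8}; [None] marks an unknown product. *)
Definition ptable := seq (seq (option nat)).

Definition entry (P : ptable) a b : option nat := nth None (nth [::] P a) b.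

Definition update (P : ptable) a b o : ptable :=
  set_nth [::] P a (set_nth None (nth [::] P a) b o).

Definition set_entry (P : ptable) a b v := update (update P a b (Some v)) b a (Some v).

Lemma entry_update P a b o i j :
  entry (update P a b o) i j = if (i == a) && (j == b) then o else entry P i j.
Proof.
rewrite /entry /update nth_set_nth /=.
by have [-> | //] := eqVneq i a; rewrite nth_set_nth.
Qed.

Lemma entry_set_entry P a b v i j :
  entry (set_entry P a b v) i j =
  if ((i == a) && (j == b)) || ((i == b) && (j == a)) then Some v else entry P i j.
Proof. by rewrite !entry_update; case: ((i == b) && (j == a)); rewrite ?orbT ?orbF. Qed.

Definition is_entry (o : option nat) v := if o is Some w then w == v else false.

Definition candidates P a b :=
  [seq v <- iota 0 9 | ~~ has (fun c => (c != b) && is_entry (entry P a c) v) (iota 0 9)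
                     & ~~ has (fun c => (c != a) && is_entry (entry P b c) v) (iota 0 9)].

Definition pairs9 := [seq (a, b) | a <- iota 0 9, b <- iota 0 9].

Definition free_cells P := [seq c <- pairs9 | (c.1 <= c.2) && ~~ entry P c.1 c.2].

Definition missing_values P :=
  [seq [seq v <- iota 0 9 | ~~ has (is_entry^~ v) (nth [::] P a)] | a <- iota 0 9].

Definition freedom (M : seq (seq nat)) (c : nat * nat) :=
  count (mem (nth [::] M c.2)) (nth [::] M c.1).

(* A heuristic: soundness only uses that the chosen cell is free. *)
Definition most_constrained_cell P : option (nat * nat) :=
  let M := missing_values P in
  if free_cells P is c :: cs then
    Some (foldl (fun c d => if freedom M d < freedom M c then d else c) c cs)
  else None.

Definition jordan_cells P a y : option ((nat * nat) * (nat * nat)) :=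
  if entry P a a is Some aa then if entry P y a is Some ya then
  if entry P aa y is Some aay then Some ((aa, ya), (aay, a))
  else None else None else None.

Definition jordan_violated_at P a y :=
  if jordan_cells P a y is Some (l, r) then
    if entry P l.1 l.2 is Some u then if entry P r.1 r.2 is Some w then u != w
    else false else false
  else false.

Definition jordan_forced_at P a y : option ((nat * nat) * nat) :=
  if jordan_cells P a y is Some (l, r) then
    match entry P l.1 l.2, entry P r.1 r.2 with
    | Some u, None => Some (r, u)
    | None, Some w => Some (l, w)
    | _, _ => None
    end
  else None.

Definition jordan_violated P := has (fun p => jordan_violated_at P p.1 p.2) pairs9.

Definition jordan_forced P :=
  let forced p := jordan_forced_at P p.1 p.2 in
  forced (nth (0, 0) pairs9 (find (fun p => forced p) pairs9)).

Definition assoc_at P a b c :=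
  if entry P a b is Some ab then if entry P b c is Some bc then
  if entry P a bc is Some l then if entry P ab c is Some r then l == r
  else false else false else false else false.

Definition assoc_table P :=
  all (fun a => all (fun b => all (assoc_at P a b) (iota 0 9)) (iota 0 9)) (iota 0 9).

(* Every recursive call fills a new cell of the upper triangle, so fuel 46
   suffices.  Plain [if]s rather than [||] keep [vm_compute] from exploring
   branches that are already refuted. *)
Fixpoint search_assoc fuel P : bool :=
  if fuel is n.+1 then
    if jordan_violated P then true else
    if jordan_forced P is Some (c, v) then
      if v \in candidates P c.1 c.2 then search_assoc n (set_entry P c.1 c.2 v) else true
    else if most_constrained_cell P is Some (a, b) then
      all (fun v => search_assoc n (set_entry P a b v)) (candidates P a b)
    else assoc_table P
  else false.

Definition init_table : ptable :=
  set_entry (set_entry (foldl (fun P j => set_entry P 0 j j) [::] (iota 0 9)) 1 1 2) 1 2 3.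

Definition jordan_table n (t : nat -> nat -> nat) :=
  [/\ forall a b, a < n -> b < n -> t a b < n,
      forall a b, t a b = t b a,
      forall a b c, a < n -> b < n -> c < n -> t a b = t a c -> b = c &
      forall a y, a < n -> y < n -> t (t a a) (t y a) = t (t (t a a) y) a].

Definition table_assoc n (t : nat -> nat -> nat) :=
  forall a b c, a < n -> b < n -> c < n -> t a (t b c) = t (t a b) c.

Section SearchSoundness.

Variable t : nat -> nat -> nat.
Hypothesis tJ : jordan_table 9 t.

Definition completes P := forall a b v, entry P a b = Some v -> [/\ a < 9, b < 9 & t a b = v].

Lemma completes_set_entry P a b v : completes P -> a < 9 -> b < 9 -> t a b = v ->
  completes (set_entry P a b v).
Proof.
case: tJ => _ tC _ _ tP a9 b9 tab i j w; rewrite entry_set_entry.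
case: ifP => [/orP[] /andP[/eqP-> /eqP->] [<-] // | _]; [by rewrite tC | exact: tP].
Qed.

Lemma mul_in_candidates P a b : completes P -> a < 9 -> b < 9 -> t a b \in candidates P a b.
Proof.
case: tJ => t9 tC tK _ tP a9 b9.
rewrite mem_filter mem_iota leq0n add0n t9 // !andbT.
apply/andP; split; apply/hasPn => c _; apply/negP => /andP[ne].
  case E: (entry P a c) => [w|] // /eqP wE; case: (tP _ _ _ E) => _ c9 tw.
  by move: ne; rewrite (tK a c b) ?eqxx // tw wE.
case E: (entry P b c) => [w|] // /eqP wE; case: (tP _ _ _ E) => _ c9 tw.
by move: ne; rewrite (tK b c a) ?eqxx // tw wE tC.
Qed.

Lemma jordan_cells_sound P a y l r : completes P -> jordan_cells P a y = Some (l, r) ->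
  [/\ l.1 < 9, l.2 < 9, r.1 < 9, r.2 < 9 & t l.1 l.2 = t r.1 r.2].
Proof.
case: tJ => t9 _ _ tJor tP; rewrite /jordan_cells.
case Eaa: (entry P a a) => [aa|] //; case Eya: (entry P y a) => [ya|] //.
case Eaay: (entry P aa y) => [aay|] // [<- <-] /=.
case: (tP _ _ _ Eaa) => a9 _ taa; case: (tP _ _ _ Eya) => y9 _ tya.
case: (tP _ _ _ Eaay) => aa9 _ taay; subst aa ya aay.
by split; rewrite ?t9 ?tJor.
Qed.

Lemma jordan_not_violated P : completes P -> ~~ jordan_violated P.
Proof.
move=> tP; rewrite /jordan_violated; apply/hasPn => -[a y] _; rewrite /jordan_violated_at.
case E: (jordan_cells P a y) => [[l r]|] //.
case: (jordan_cells_sound tP E) => _ _ _ _ lr.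
case El: (entry P _ _) => [u|] //; case Er: (entry P _ _) => [w|] //.
case: (tP _ _ _ El) => _ _ <-; case: (tP _ _ _ Er) => _ _ <-.
by rewrite lr eqxx.
Qed.

Lemma jordan_forced_sound P c v : completes P -> jordan_forced P = Some (c, v) ->
  [/\ c.1 < 9, c.2 < 9 & t c.1 c.2 = v].
Proof.
move=> tP; rewrite /jordan_forced /jordan_forced_at.
case E: (jordan_cells P _ _) => [[l r]|] //.
case: (jordan_cells_sound tP E) => l1 l2 r1 r2 lr.
case El: (entry P l.1 l.2) => [u|]; case Er: (entry P r.1 r.2) => [w|] // [<- <-].
  by case: (tP _ _ _ El) => _ _ <-; rewrite lr.
by case: (tP _ _ _ Er) => _ _ <-; rewrite lr.
Qed.

Lemma most_constrained_cell_free P a b :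
  most_constrained_cell P = Some (a, b) -> (a, b) \in free_cells P.
Proof.
rewrite /most_constrained_cell; case: (free_cells P) => [|c cs] // [<-].
elim: cs c => [|d cs IH] c /=; first exact: mem_head.
by case: ifP => _; [move: (IH d) | move: (IH c)];
  rewrite !inE => /orP[] ->; rewrite ?orbT.
Qed.

Lemma mem_free_cells P a b : (a, b) \in free_cells P -> a < 9 /\ b < 9.
Proof.
rewrite mem_filter => /andP[_ /allpairsP[[i j] []]].
by rewrite !mem_iota => /andP[_ i9] /andP[_ j9] [-> ->].
Qed.

Lemma assoc_table_sound P : completes P -> assoc_table P -> table_assoc 9 t.
Proof.
move=> tP /allP tA a b c a9 b9 c9.
move: tA => /(_ a); rewrite mem_iota a9 => /(_ isT) /allP /(_ b).
rewrite mem_iota b9 => /(_ isT) /allP /(_ c); rewrite mem_iota c9 => /(_ isT).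
rewrite /assoc_at.
case Eab: (entry P a b) => [ab|] //; case Ebc: (entry P b c) => [bc|] //.
case El: (entry P a bc) => [l|] //; case Er: (entry P ab c) => [r|] // /eqP lr.
case: (tP _ _ _ Eab) => _ _ ->; case: (tP _ _ _ Ebc) => _ _ ->.
by case: (tP _ _ _ El) => _ _ ->; case: (tP _ _ _ Er) => _ _ ->.
Qed.

Lemma search_assoc_sound fuel P : completes P -> search_assoc fuel P -> table_assoc 9 t.
Proof.
elim: fuel P => [|n IH] P tP //=.
rewrite (negbTE (jordan_not_violated tP)).
case Ef: (jordan_forced P) => [[c v]|].
  case: (jordan_forced_sound tP Ef) => c1 c2 <-.
  by rewrite (mul_in_candidates tP c1 c2); apply/IH/completes_set_entry.
case Ep: (most_constrained_cell P) => [[a b]|]; last exact: assoc_table_sound.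
case: (mem_free_cells (most_constrained_cell_free Ep)) => a9 b9 /allP /(_ _ (mul_in_candidates tP a9 b9)).
by apply: IH; apply: completes_set_entry.
Qed.

End SearchSoundness.

Lemma completes_init_table t : jordan_table 9 t ->
  (forall j, j < 9 -> t 0 j = j) -> t 1 1 = 2 -> t 1 2 = 3 -> completes t init_table.
Proof.
move=> tJ t0 t11 t12.
have init_row P js : completes t P -> all (gtn 9) js ->
    completes t (foldl (fun P j => set_entry P 0 j j) P js).
  elim: js P => [|j js IH] P //= tP /andP[j9 js9]; apply: IH js9.
  exact: completes_set_entry (t0 j j9).
do 2 apply: completes_set_entry => //.
by apply: init_row => // a b v; rewrite /entry !nth_nil.
Qed.

Lemma search_ok : search_assoc 50 init_table.
Proof. vm_cast_no_check (erefl true). Qed.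

Definition enum_from (T : finType) (l : seq T) := l ++ [seq z <- enum T | z \notin l].

Lemma mem_enum_from (T : finType) (l : seq T) z : z \in enum_from l.
Proof. by rewrite mem_cat mem_filter mem_enum andbT orbN. Qed.

Lemma enum_from_uniq (T : finType) (l : seq T) : uniq l -> uniq (enum_from l).
Proof.
move=> ul; rewrite cat_uniq ul filter_uniq ?enum_uniq //= andbT.
by apply/hasPn => z; rewrite mem_filter => /andP[].
Qed.

Lemma generated_subloopT (T : finType) (mul : T -> T -> T) e x S :
  generates mul e x -> is_subloop mul e S -> x \in S -> S = setT.
Proof. by move=> gen subS xS; apply/setP => z; rewrite inE (gen z S subS xS). Qed.

Section JordanLoop.

Variables (T : finType) (mul : T -> T -> T) (e : T).
Hypothesis hJ : is_jordan_loop mul e.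

Lemma mul1q x : mul e x = x. Proof. by case: hJ => [[/(_ x)[]]]. Qed.

Lemma mulqC : commutative mul. Proof. by case: hJ => _ []. Qed.

Lemma mulq1 x : mul x e = x. Proof. by rewrite mulqC mul1q. Qed.

Lemma mulq_jordan x y : mul (mul x x) (mul y x) = mul (mul (mul x x) y) x.
Proof. by case: hJ => _ []. Qed.

Lemma mulqI a : injective (mul a).
Proof.
move=> y1 y2 E; case: hJ => [[_ [/(_ a (mul a y1)) [z [_ uniq_z]] _]] _].
by rewrite -(uniq_z y1) // (uniq_z y2).
Qed.

Lemma mul_closed_subloop (S : {set T}) :
  e \in S -> {in S &, forall a b, mul a b \in S} -> is_subloop mul e S.
Proof.
move=> eS mulS.
have divS a z : a \in S -> mul a z \in S -> z \in S.
  move=> aS; have onto : [set mul a s | s in S] = S.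
    apply/eqP; rewrite eqEcard card_imset; last exact: mulqI.
    by rewrite leqnn andbT; apply/subsetP => _ /imsetP[s sS ->]; apply: mulS.
  by rewrite -{1}onto => /imsetP[s sS /mulqI ->].
by split=> //; split=> //; split=> [|a y aS]; [exact: divS | rewrite mulqC; exact: divS].
Qed.

Lemma cube_notin_squares x : generates mul e x -> 3 < #|T| ->
  mul x (mul x x) \notin [:: e; x; mul x x].
Proof.
move=> gen card3; apply/negP => x3S.
pose S := [set z in [:: e; x; mul x x]].
have {}x3S : mul x (mul x x) \in S by rewrite inE.
have x4S : mul (mul x x) (mul x x) \in S.
  rewrite mulq_jordan [mul (mul x x) x]mulqC mulqC.
  by move: (x3S); rewrite !inE => /or3P[] /eqP x3E; rewrite !x3E ?mulq1 eqxx ?orbT.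
have subS : is_subloop mul e S.
  apply: mul_closed_subloop => [|a b]; first by rewrite !inE eqxx.
  rewrite !inE in x3S x4S *; move=> /or3P[] /eqP-> /or3P[] /eqP->;
    by rewrite ?mul1q ?mulq1 1?[mul (mul x x) x]mulqC ?eqxx ?orbT.
have : #|S| <= 3 by rewrite cardsE card_size.
by rewrite (generated_subloopT gen subS) ?cardsT ?inE ?eqxx ?orbT // leqNgt card3.
Qed.

Lemma first_powers_uniq x : mul x (mul x x) \notin [:: e; x; mul x x] ->
  uniq [:: e; x; mul x x; mul x (mul x x)].
Proof.
rewrite !inE !negb_or => /and3P[x3e x3x x3xx].
have ex : e != x by apply: contraNneq x3e => <-; rewrite !mul1q.
have exx : e != mul x x by apply: contraNneq x3x => <-; rewrite mulq1.
have xxx : x != mul x x by apply: contraNneq ex; rewrite -{1}[x]mulq1 => /mulqI ->.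
by rewrite /= !inE !negb_or ex exx xxx !(eq_sym _ (mul x (mul x x))) x3e x3x x3xx.
Qed.

Definition mul_table (s : seq T) a b := index (mul (nth e s a) (nth e s b)) s.

Section MulTable.

Variable s : seq T.
Hypotheses (s_uniq : uniq s) (mem_s : forall z, z \in s).

Lemma size_table_enum : size s = #|T|.
Proof. by rewrite -(card_uniqP s_uniq); apply: eq_card. Qed.

Lemma nth_mul_table a b : nth e s (mul_table s a b) = mul (nth e s a) (nth e s b).
Proof. exact: nth_index. Qed.

Lemma mul_table_jordan : jordan_table #|T| (mul_table s).
Proof.
rewrite -size_table_enum; split=> [a b _ _ | a b | a b c _ b_lt c_lt | a y _ _].
- by rewrite index_mem.
- by rewrite /mul_table mulqC.
- move/(congr1 (nth e s)); rewrite !nth_mul_table => /mulqI bc.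
  by rewrite -(index_uniq e b_lt s_uniq) bc index_uniq.
- by apply: (congr1 (index^~ s)); rewrite !nth_mul_table mulq_jordan.
Qed.

Lemma mul_table_assoc : table_assoc #|T| (mul_table s) -> is_group_op mul.
Proof.
rewrite -size_table_enum => tA x y z.
have index_lt w : index w s < size s by rewrite index_mem.
move: (tA _ _ _ (index_lt x) (index_lt y) (index_lt z)).
by move/(congr1 (nth e s)); rewrite !nth_mul_table !nth_index.
Qed.

End MulTable.

End JordanLoop.

Theorem lemma3p8 (T : finType) (mul : T -> T -> T) (e : T) :
  #|T| = 9 ->
  is_jordan_loop mul e ->
  (exists x : T, generates mul e x) ->
  is_group_op mul.
Proof.
move=> card9 hJ [x gen].
have x3_new : mul x (mul x x) \notin [:: e; x; mul x x].
  by apply: (cube_notin_squares hJ gen); rewrite card9.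
pose s := enum_from [:: e; x; mul x x; mul x (mul x x)].
have s_uniq : uniq s := enum_from_uniq (first_powers_uniq hJ x3_new).
have mem_s : forall z, z \in s := mem_enum_from _.
have index_nth i : i < 9 -> index (nth e s i) s = i.
  by move=> i_lt; rewrite index_uniq // (size_table_enum s_uniq mem_s) card9.
apply: (mul_table_assoc s_uniq mem_s); rewrite card9.
have tJ := mul_table_jordan hJ s_uniq mem_s; rewrite card9 in tJ.
apply: (search_assoc_sound tJ _ search_ok).
apply: completes_init_table => // [j j_lt | |]; rewrite /mul_table.
- by rewrite (_ : nth e s 0 = e) // (mul1q hJ); apply: index_nth.
- exact: (index_nth 2).
- exact: (index_nth 3).
Qed.
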